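(* For every even integer $s\ge4$ there exists a linear $(2,s-1,s,2)$-AONT.
   Context: A linear $(t_i,t_o,s,q)$-AONT is given by an invertible $s\times s$ matrix $M$ over $\mathbb{F}_q$ defining the map $\mathbf{x}\mapsto\mathbf{y}=\mathbf{x}M^{-1}$ on row vectors of $\mathbb{F}_q^s$, such that for every set $I$ of $t_i$ input coordinates and every set $J$ of $s-t_o$ output coordinates, the pair $((x_i)_{i\in I},(y_j)_{j\in J})$ takes every value in $\mathbb{F}_q^{t_i+s-t_o}$ equally often as $\mathbf{x}$ ranges over $\mathbb{F}_q^s$. Equivalently, $M$ is invertible and every $t_o\times t_i$ submatrix of $M$ has rank $t_i$. *)

From mathcomp Require Import all_boot all_algebra.
Set Implicit Arguments. Unset Strict Implicit. Unset Printing Implicit Defensive.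
Local Open Scope ring_scope.

(* A linear (t_i, t_o, s, q)-AONT over the field F (with #|F| = q) is given by
   an invertible s x s matrix M such that every t_o x t_i submatrix of M
   (choose t_o distinct rows and t_i distinct columns) has rank t_i. *)
Definition linear_AONT (F : fieldType) (ti to s : nat) (M : 'M[F]_s) : Prop :=
  M \in unitmx /\
  forall (r : 'I_to -> 'I_s) (c : 'I_ti -> 'I_s),
    injective r -> injective c ->
    \rank (mxsub r c M) = ti.

From mathcomp Require Import all_boot all_algebra.
Set Implicit Arguments. Unset Strict Implicit. Unset Printing Implicit Defensive.
Import GRing.Theory.
Local Open Scope ring_scope.

(* Take for M the adjacency matrix J - I of the complete graph on s vertices,
   J the all-ones matrix.  Since J * J = s J, the matrix J - I has inverse
   (s - 1)^-1 J - I as soon as s - 1 is nonzero in the field, e.g. over F_2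
   for even s.  Two distinct columns c0, c1 of J - I, restricted to s - 1 >= 3
   of the rows, are independent: some selected row avoids {c0, c1}, where both
   columns are 1, and, since only one row is omitted, some selected row lies
   in {c0, c1}, where exactly one of the columns is 1. *)

Lemma exists_notin_of_card_lt (T : finType) (n : nat) (r : 'I_n -> T)
    (S : {set T}) :
  injective r -> (#|S| < n)%N -> exists k, r k \notin S.
Proof.
move=> r_inj ltSn; apply/existsP; apply: contraTT ltSn.
rewrite negb_exists -leqNgt => /forallP rS.
rewrite -[n]card_ord -(card_codom r_inj); apply: subset_leq_card.
by apply/subsetP => _ /codomP[k ->]; have := rS k; rewrite negbK.
Qed.

Lemma row_free_of_mul_eq0 (F : fieldType) (m n : nat) (A : 'M[F]_(m, n)) :
  (forall u : 'rV_m, u *m A = 0 -> u = 0) -> row_free A.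
Proof.
by move=> uA0; rewrite -kermx_eq0; apply/rowV0P => u /sub_kermxP/uA0.
Qed.

Definition adj_complete (R : pzRingType) (n : nat) : 'M[R]_n :=
  \matrix_(i, j) (i != j)%:R.

Lemma adj_complete_const1 (R : pzRingType) (n : nat) :
  adj_complete R n = const_mx 1 - 1%:M.
Proof.
by apply/matrixP => i j; rewrite !mxE; case: eqP; rewrite ?subrr ?subr0.
Qed.

Lemma mul_const1mx (R : pzRingType) (m n p : nat) :
  (const_mx 1 : 'M[R]_(m, n)) *m (const_mx 1 : 'M_(n, p)) = n%:R *: const_mx 1.
Proof.
apply/matrixP => i j; rewrite !mxE mulr1.
by under eq_bigr do rewrite !mxE mulr1; rewrite sumr_const card_ord.
Qed.

Lemma adj_complete_unit (F : fieldType) (n : nat) :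
  n%:R != 0 :> F -> adj_complete F n.+1 \in unitmx.
Proof.
move=> n_neq0; pose J : 'M[F]_n.+1 := const_mx 1.
suff: adj_complete F n.+1 *m (n%:R^-1 *: J - 1%:M) = 1%:M by case/mulmx1_unit.
rewrite adj_complete_const1 mulmxBl !mulmxBr !mulmx1 mul1mx.
rewrite -scalemxAr mul_const1mx scalerA.
rewrite -natr1 mulrDr mulVf // mulr1 scalerDl scale1r.
by rewrite addrAC opprD addrA addrK addrAC subrr add0r opprK.
Qed.

Lemma rank_mxsub_adj_complete (F : fieldType) (n : nat)
    (r : 'I_n -> 'I_n.+1) (c : 'I_2 -> 'I_n.+1) :
  (2 < n)%N -> injective r -> injective c ->
  \rank (mxsub r c (adj_complete F n.+1)) = 2.
Proof.
move=> n_gt2 r_inj c_inj; pose S := [set c 0; c 1].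
have c01 : c 0 != c 1 by rewrite (inj_eq c_inj).
have cardS : #|S| = 2 by rewrite cards2 c01.
rewrite -mxrank_tr; apply/eqP/row_free_of_mul_eq0 => u uA0.
have {}uA0 k : u 0 0 * (r k != c 0)%:R + u 0 1 * (r k != c 1)%:R = 0.
  have /rowP/(_ k) := uA0; rewrite !mxE big_ord_recl big_ord1 !mxE.
  by have -> : lift ord0 ord0 = 1 :> 'I_2 by apply: val_inj.
have u_eq0 : u 0 0 = 0 -> u 0 1 = 0 -> u = 0.
  move=> u0 u1; apply/rowP => j; rewrite mxE.
  case: j => -[|[|//]] j_lt; [rewrite -u0 | rewrite -u1];
    by congr (u _ _); apply: val_inj.
have [k_out] : exists k, r k \notin S.
  by apply: exists_notin_of_card_lt; rewrite ?cardS.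
rewrite !inE negb_or => /andP[out0 out1].
have u_sum : u 0 0 + u 0 1 = 0 by have := uA0 k_out; rewrite out0 out1 !mulr1.
have [k_in] : exists k, r k \notin ~: S.
  apply: exists_notin_of_card_lt; rewrite // cardsCs setCK card_ord cardS.
  by rewrite subSS subn1 ltn_predL (ltn_trans _ n_gt2).
rewrite !inE negbK => /orP[] /eqP in_k; have := uA0 k_in.
- rewrite in_k eqxx c01 mulr0 add0r mulr1 => u1.
  by apply: (u_eq0 _ u1); rewrite -u_sum u1 addr0.
- rewrite in_k eqxx eq_sym c01 mulr1 mulr0 addr0 => u0.
  by apply: (u_eq0 u0); rewrite -u_sum u0 add0r.
Qed.

Lemma adj_complete_AONT (F : fieldType) (n : nat) :
  (2 < n)%N -> n%:R != 0 :> F -> linear_AONT 2 n (adj_complete F n.+1).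
Proof.
move=> n_gt2 n_neq0; split; first exact: adj_complete_unit.
by move=> r c; apply: rank_mxsub_adj_complete.
Qed.

Theorem mainTheorem13 (s : nat) :
  (4 <= s)%N -> ~~ odd s ->
  exists M : 'M['F_2]_s, linear_AONT 2 s.-1 M.
Proof.
case: s => // n n_gt2; rewrite /= negbK => n_odd; exists (adj_complete _ n.+1).
apply: adj_complete_AONT => //.
by rewrite -(Fp_nat_mod (p := 2)) // modn2 n_odd oner_neq0.
Qed.
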